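(* If every map in $(\mathbb{X}, \dagger)$ admits a \textbf{[MP.1,3]}-inverse, then for every object $X \in \mathbb{X}$, $\mathfrak{G}\left[ (\mathbb{X}, \dagger) \right]_X$ is a Markov category with conditionals.
   Context: Let $(\mathbb{X}, \dagger)$ be a dagger additive category (a dagger category enriched in abelian groups with additive dagger and finite biproducts satisfying $\pi_j^\dagger = \iota_j$). A [MP.1,3]-inverse of $f: A \to B$ is a map $f^\bullet: B \to A$ with $f \circ f^\bullet \circ f = f$ and $(f \circ f^\bullet)^\dagger = f \circ f^\bullet$. A map $p$ is $\dagger$-positive if $p = \phi^\dagger \circ \phi$ for some $\phi$. For an object $X$, the Gauss construction $\mathfrak{G}\left[ (\mathbb{X}, \dagger) \right]_X$ is the Markov category with the objects of $\mathbb{X}$, maps $A \to B$ the triples $(f,p,x)$ with $f: A \to B$, $p: B \to B$ $\dagger$-positive, $x: X \to B$; identities $\mathsf{Id}_A = (\mathsf{id}_A,0,0)$; composition $(g,q,y) \circ (f,p,x) = (g \circ f, q + g \circ p \circ g^\dagger, y + g \circ x)$; $A \otimes B = A \oplus B$, $(f,p,x) \otimes (g,q,y) = \left(f \oplus g, p \oplus q, \begin{bmatrix} x \\ y \end{bmatrix}\right)$; copy $\left(\begin{bmatrix} \mathsf{id}_A \\ \mathsf{id}_A \end{bmatrix}, 0, 0\right)$, delete $(0,0,0): A \to \mathsf{0}$. A Markov category has conditionals if every map $F: A \to B \otimes C$ has a map $G: B \otimes A \to C$ with $(\mathsf{Id}_B \otimes G) \circ (\mathsf{copy}_B \otimes \mathsf{Id}_A)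 \circ (\mathsf{Id}_B \otimes \mathsf{del}_C \otimes \mathsf{Id}_A) \circ (F \otimes \mathsf{Id}_A) \circ \mathsf{copy}_A = F$. *)

From HB Require Import structures.
From mathcomp Require Import all_boot all_algebra.
Set Implicit Arguments.
Unset Strict Implicit.
Unset Printing Implicit Defensive.
Import GRing.Theory.
Local Open Scope ring_scope.

Record DagAddCat := {
  Ob : Type;
  Hom : Ob -> Ob -> zmodType;
  idm : forall A : Ob, Hom A A;
  comp : forall A B C : Ob, Hom B C -> Hom A B -> Hom A C;
  comp_assoc : forall A B C D (h : Hom C D) (g : Hom B C) (f : Hom A B),
      comp h (comp g f) = comp (comp h g) f;
  comp_id_l : forall A B (f : Hom A B), comp (idm B) f = f;
  comp_id_r : forall A B (f : Hom A B), comp f (idm A) = f;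
  comp_addl : forall A B C (g1 g2 : Hom B C) (f : Hom A B),
      comp (g1 + g2) f = comp g1 f + comp g2 f;
  comp_addr : forall A B C (g : Hom B C) (f1 f2 : Hom A B),
      comp g (f1 + f2) = comp g f1 + comp g f2;
  dag : forall A B : Ob, Hom A B -> Hom B A;
  dag_id : forall A, dag (idm A) = idm A;
  dag_comp : forall A B C (g : Hom B C) (f : Hom A B),
      dag (comp g f) = comp (dag f) (dag g);
  dag_invol : forall A B (f : Hom A B), dag (dag f) = f;
  dag_add : forall A B (f g : Hom A B), dag (f + g) = dag f + dag g;
  zob : Ob;
  zob_id : idm zob = 0;
  bp : Ob -> Ob -> Ob;
  pi1 : forall A B, Hom (bp A B) A;
  pi2 : forall A B, Hom (bp A B) B;
  io1 : forall A B, Hom A (bp A B);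
  io2 : forall A B, Hom B (bp A B);
  pi1_io1 : forall A B, comp (pi1 A B) (io1 A B) = idm A;
  pi2_io2 : forall A B, comp (pi2 A B) (io2 A B) = idm B;
  pi1_io2 : forall A B, comp (pi1 A B) (io2 A B) = 0;
  pi2_io1 : forall A B, comp (pi2 A B) (io1 A B) = 0;
  io_pi : forall A B,
      comp (io1 A B) (pi1 A B) + comp (io2 A B) (pi2 A B) = idm (bp A B);
  dag_pi1 : forall A B, dag (pi1 A B) = io1 A B;
  dag_pi2 : forall A B, dag (pi2 A B) = io2 A B
}.

Arguments idm {d} A.
Arguments comp {d A B C}.
Arguments dag {d A B}.
Arguments zob {d}.
Arguments bp {d}.
Arguments pi1 {d} A B.
Arguments pi2 {d} A B.
Arguments io1 {d} A B.
Arguments io2 {d} A B.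

Section Defs.
Variable X : DagAddCat.
Local Notation Ob := (@Ob X).
Local Notation Hom := (@Hom X).

Definition MP13_inverse (A B : Ob) (f : Hom A B) (g : Hom B A) : Prop :=
  comp f (comp g f) = f /\ dag (comp f g) = comp f g.

Definition has_MP13_inverses : Prop :=
  forall (A B : Ob) (f : Hom A B), exists g : Hom B A, MP13_inverse f g.

Definition dag_positive (B : Ob) (p : Hom B B) : Prop :=
  exists (C : Ob) (phi : Hom B C), p = comp (dag phi) phi.

Definition hsum (A A' B B' : Ob) (f : Hom A B) (g : Hom A' B') :
    Hom (bp A A') (bp B B') :=
  comp (io1 B B') (comp f (pi1 A A')) + comp (io2 B B') (comp g (pi2 A A')).

Definition hpair (Y B B' : Ob) (x : Hom Y B) (y : Hom Y B') : Hom Y (bp B B') :=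
  comp (io1 B B') x + comp (io2 B B') y.

Variable Xo : Ob.

(* raw triples (f, p, x); the maps of the Gauss category are the triples
   whose middle component is dagger-positive (predicate gauss_map). *)
Record GTrip (A B : Ob) := GT { gf : Hom A B; gp : Hom B B; gx : Hom Xo B }.

Definition gauss_map (A B : Ob) (F : GTrip A B) : Prop := dag_positive (gp F).

Definition GId (A : Ob) : GTrip A A := GT (idm A) 0 0.

Definition Gcomp (A B C : Ob) (G : GTrip B C) (F : GTrip A B) : GTrip A C :=
  GT (comp (gf G) (gf F))
     (gp G + comp (gf G) (comp (gp F) (dag (gf G))))
     (gx G + comp (gf G) (gx F)).

Definition Gtens (A A' B B' : Ob) (F : GTrip A B) (G : GTrip A' B') :
    GTrip (bp A A') (bp B B') :=
  GT (hsum (gf F) (gf G)) (hsum (gp F) (gp G)) (hpair (gx F) (gx G)).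

Definition Gcopy (A : Ob) : GTrip A (bp A A) := GT (hpair (idm A) (idm A)) 0 0.

Definition Gdel (A : Ob) : GTrip A zob := GT 0 0 0.

Definition Gunitr (B : Ob) : GTrip (bp B zob) B := GT (pi1 B zob) 0 0.

Definition Gassoc (A B C : Ob) : GTrip (bp (bp A B) C) (bp A (bp B C)) :=
  GT (comp (io1 A (bp B C)) (comp (pi1 A B) (pi1 (bp A B) C))
      + comp (io2 A (bp B C))
          (comp (io1 B C) (comp (pi2 A B) (pi1 (bp A B) C)))
      + comp (io2 A (bp B C)) (comp (io2 B C) (pi2 (bp A B) C))) 0 0.

(* Existence of conditionals in the Gauss category: every F : A -> B (x) C
   admits G : B (x) A -> C with
   (Id_B (x) G) o (copy_B (x) Id_A) o (Id_B (x) del_C (x) Id_A)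
      o (F (x) Id_A) o copy_A = F,
   with the associator / right unitor written explicitly. *)
Definition gauss_has_conditionals : Prop :=
  forall (A B C : Ob) (F : GTrip A (bp B C)), gauss_map F ->
  exists G : GTrip (bp B A) C, gauss_map G /\
    Gcomp (Gtens (GId B) G)
     (Gcomp (Gassoc B B A)
      (Gcomp (Gtens (Gcopy B) (GId A))
       (Gcomp (Gtens (Gunitr B) (GId A))
        (Gcomp (Gtens (Gtens (GId B) (Gdel C)) (GId A))
         (Gcomp (Gtens F (GId A)) (Gcopy A)))))) = F.

End Defs.

(* Write the middle component of F : A -> B (+) C as p = phi^dag phi, let
   phi_B, phi_C be the restrictions of phi to B and C, and let h be an
   [MP.1,3]-inverse of phi_B, so that phi_B h is a self-adjoint idempotent.
   Then beta := (h phi_C)^dag satisfies beta phi_B^dag phi_B = phi_C^dag phi_B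
   (beta plays the role of the regression coefficient Sigma_CB Sigma_BB^+), and
   the residual psi := (1 - phi_B h) phi_C has Gram map
   phi_C^dag phi_C - phi_C^dag phi_B h phi_C, the Schur complement.
   The conditional is G = ([beta, f_C - beta f_B], psi^dag psi, x_C - beta x_B):
   the structural maps of the conditional equation compose to the deterministic
   map (b, c, a) |-> (b, (b, a)), after which the equation reduces blockwise to
   these two identities. *)

From Pilot Require Import Defs.
From mathcomp Require Import all_boot all_algebra.
Set Implicit Arguments.
Unset Strict Implicit.
Unset Printing Implicit Defensive.
Import GRing.Theory.
Local Open Scope ring_scope.
Local Notation comp := Defs.comp.

Section AdditiveDagger.
Variable d : DagAddCat.
Local Notation Ob := (@Defs.Ob d).
Local Notation Hom := (@Defs.Hom d).
Implicit Types A B C D Y : Ob.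

Lemma comp0l A B C (f : Hom A B) : comp (0 : Hom B C) f = 0.
Proof. by apply: (@addrI _ (comp 0 f)); rewrite -comp_addl !addr0. Qed.

Lemma comp0r A B C (g : Hom B C) : comp g (0 : Hom A B) = 0.
Proof. by apply: (@addrI _ (comp g 0)); rewrite -comp_addr !addr0. Qed.

Lemma compNl A B C (g : Hom B C) (f : Hom A B) : comp (- g) f = - comp g f.
Proof. by apply: (@addrI _ (comp g f)); rewrite -comp_addl !subrr comp0l. Qed.

Lemma compNr A B C (g : Hom B C) (f : Hom A B) : comp g (- f) = - comp g f.
Proof. by apply: (@addrI _ (comp g f)); rewrite -comp_addr !subrr comp0r. Qed.

Lemma dag0 A B : dag (0 : Hom A B) = 0.
Proof. by apply: (@addrI _ (dag (0 : Hom A B))); rewrite -dag_add !addr0. Qed.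

Lemma dagN A B (f : Hom A B) : dag (- f) = - dag f.
Proof. by apply: (@addrI _ (dag f)); rewrite -dag_add !subrr dag0. Qed.

Lemma dag_io1 A B : dag (io1 A B) = pi1 A B.
Proof. by rewrite -dag_pi1 dag_invol. Qed.

Lemma dag_io2 A B : dag (io2 A B) = pi2 A B.
Proof. by rewrite -dag_pi2 dag_invol. Qed.

Lemma dag_gram A B C (u : Hom A C) (v : Hom B C) :
  dag (comp (dag u) v) = comp (dag v) u.
Proof. by rewrite dag_comp dag_invol. Qed.

Lemma comp_pi1_io1 A B C (r : Hom C A) : comp (pi1 A B) (comp (io1 A B) r) = r.
Proof. by rewrite comp_assoc pi1_io1 comp_id_l. Qed.

Lemma comp_pi2_io2 A B C (r : Hom C B) : comp (pi2 A B) (comp (io2 A B) r) = r.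
Proof. by rewrite comp_assoc pi2_io2 comp_id_l. Qed.

Lemma comp_pi1_io2 A B C (r : Hom C B) : comp (pi1 A B) (comp (io2 A B) r) = 0.
Proof. by rewrite comp_assoc pi1_io2 comp0l. Qed.

Lemma comp_pi2_io1 A B C (r : Hom C A) : comp (pi2 A B) (comp (io1 A B) r) = 0.
Proof. by rewrite comp_assoc pi2_io1 comp0l. Qed.

Definition hcopair A A' B (u : Hom A B) (v : Hom A' B) : Hom (bp A A') B :=
  comp u (pi1 A A') + comp v (pi2 A A').

Lemma hpair_eta Y B C (u : Hom Y (bp B C)) :
  u = hpair (comp (pi1 B C) u) (comp (pi2 B C) u).
Proof. by rewrite /hpair !comp_assoc -comp_addl io_pi comp_id_l. Qed.

Lemma hcopair_eta Y B C (u : Hom (bp B C) Y) :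
  u = hcopair (comp u (io1 B C)) (comp u (io2 B C)).
Proof. by rewrite /hcopair -!comp_assoc -comp_addr io_pi comp_id_r. Qed.

Lemma hom_into_bp_ext Y B C (u v : Hom Y (bp B C)) :
  comp (pi1 B C) u = comp (pi1 B C) v -> comp (pi2 B C) u = comp (pi2 B C) v ->
  u = v.
Proof. by move=> e1 e2; rewrite (hpair_eta u) (hpair_eta v) e1 e2. Qed.

Lemma hom_from_bp_ext Y B C (u v : Hom (bp B C) Y) :
  comp u (io1 B C) = comp v (io1 B C) -> comp u (io2 B C) = comp v (io2 B C) ->
  u = v.
Proof. by move=> e1 e2; rewrite (hcopair_eta u) (hcopair_eta v) e1 e2. Qed.

Lemma comp_pi1_hsum A A' B B' Y (f : Hom A B) (g : Hom A' B') (r : Hom Y (bp A A')) :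
  comp (pi1 B B') (comp (hsum f g) r) = comp f (comp (pi1 A A') r).
Proof.
by rewrite /hsum comp_addl !comp_addr -!comp_assoc comp_pi1_io1 comp_pi1_io2 addr0.
Qed.

Lemma comp_pi2_hsum A A' B B' Y (f : Hom A B) (g : Hom A' B') (r : Hom Y (bp A A')) :
  comp (pi2 B B') (comp (hsum f g) r) = comp g (comp (pi2 A A') r).
Proof.
by rewrite /hsum comp_addl !comp_addr -!comp_assoc comp_pi2_io1 comp_pi2_io2 add0r.
Qed.

Lemma comp_hsum_io1 A A' B B' Y (f : Hom A B) (g : Hom A' B') (r : Hom Y A) :
  comp (hsum f g) (comp (io1 A A') r) = comp (io1 B B') (comp f r).
Proof.
by rewrite /hsum comp_addl -!comp_assoc comp_pi1_io1 comp_pi2_io1 !comp0r addr0.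
Qed.

Lemma comp_hsum_io2 A A' B B' Y (f : Hom A B) (g : Hom A' B') (r : Hom Y A') :
  comp (hsum f g) (comp (io2 A A') r) = comp (io2 B B') (comp g r).
Proof.
by rewrite /hsum comp_addl -!comp_assoc comp_pi1_io2 comp_pi2_io2 !comp0r add0r.
Qed.

Lemma comp_pi1_hpair Y B B' Z (x : Hom Y B) (y : Hom Y B') (r : Hom Z Y) :
  comp (pi1 B B') (comp (hpair x y) r) = comp x r.
Proof.
by rewrite /hpair comp_addl comp_addr -!comp_assoc comp_pi1_io1 comp_pi1_io2 addr0.
Qed.

Lemma comp_pi2_hpair Y B B' Z (x : Hom Y B) (y : Hom Y B') (r : Hom Z Y) :
  comp (pi2 B B') (comp (hpair x y) r) = comp y r.
Proof.
by rewrite /hpair comp_addl comp_addr -!comp_assoc comp_pi2_io1 comp_pi2_io2 add0r.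
Qed.

Lemma dag_hsum A A' B B' (f : Hom A B) (g : Hom A' B') :
  dag (hsum f g) = hsum (dag f) (dag g).
Proof.
by rewrite /hsum dag_add !dag_comp dag_pi1 dag_pi2 dag_io1 dag_io2 !comp_assoc.
Qed.

Lemma dag_hpair Y B B' (x : Hom Y B) (y : Hom Y B') :
  dag (hpair x y) = hcopair (dag x) (dag y).
Proof. by rewrite /hpair dag_add !dag_comp dag_io1 dag_io2. Qed.

Lemma hsum0 A A' B B' : hsum (0 : Hom A B) (0 : Hom A' B') = 0.
Proof. by rewrite /hsum !comp0l !comp0r addr0. Qed.

Lemma hpair0 Y B B' : hpair (0 : Hom Y B) (0 : Hom Y B') = 0.
Proof. by rewrite /hpair !comp0r addr0. Qed.

Lemma pi1_hsum A A' B B' (f : Hom A B) (g : Hom A' B') :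
  comp (pi1 B B') (hsum f g) = comp f (pi1 A A').
Proof. by rewrite -[hsum f g]comp_id_r comp_pi1_hsum comp_id_r. Qed.

Lemma pi2_hsum A A' B B' (f : Hom A B) (g : Hom A' B') :
  comp (pi2 B B') (hsum f g) = comp g (pi2 A A').
Proof. by rewrite -[hsum f g]comp_id_r comp_pi2_hsum comp_id_r. Qed.

Lemma hsum_io1 A A' B B' (f : Hom A B) (g : Hom A' B') :
  comp (hsum f g) (io1 A A') = comp (io1 B B') f.
Proof. by rewrite -[io1 A A']comp_id_r comp_hsum_io1 comp_id_r. Qed.

Lemma hsum_io2 A A' B B' (f : Hom A B) (g : Hom A' B') :
  comp (hsum f g) (io2 A A') = comp (io2 B B') g.
Proof. by rewrite -[io2 A A']comp_id_r comp_hsum_io2 comp_id_r. Qed.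

Lemma pi1_hpair Y B B' (x : Hom Y B) (y : Hom Y B') : comp (pi1 B B') (hpair x y) = x.
Proof. by rewrite -[hpair x y]comp_id_r comp_pi1_hpair comp_id_r. Qed.

Lemma pi2_hpair Y B B' (x : Hom Y B) (y : Hom Y B') : comp (pi2 B B') (hpair x y) = y.
Proof. by rewrite -[hpair x y]comp_id_r comp_pi2_hpair comp_id_r. Qed.

Lemma comp_hcopair_io1 A A' B Y (u : Hom A B) (v : Hom A' B) (r : Hom Y A) :
  comp (hcopair u v) (comp (io1 A A') r) = comp u r.
Proof.
by rewrite /hcopair comp_addl -!comp_assoc comp_pi1_io1 comp_pi2_io1 comp0r addr0.
Qed.

Lemma comp_hcopair_io2 A A' B Y (u : Hom A B) (v : Hom A' B) (r : Hom Y A') :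
  comp (hcopair u v) (comp (io2 A A') r) = comp v r.
Proof.
by rewrite /hcopair comp_addl -!comp_assoc comp_pi1_io2 comp_pi2_io2 comp0r add0r.
Qed.

Lemma hcopair_io1 A A' B (u : Hom A B) (v : Hom A' B) : comp (hcopair u v) (io1 A A') = u.
Proof. by rewrite -[io1 A A']comp_id_r comp_hcopair_io1 comp_id_r. Qed.

Lemma hcopair_io2 A A' B (u : Hom A B) (v : Hom A' B) : comp (hcopair u v) (io2 A A') = v.
Proof. by rewrite -[io2 A A']comp_id_r comp_hcopair_io2 comp_id_r. Qed.

End AdditiveDagger.

(* After [bp_ext] both sides are sums of paths pi_i o ... o io_j; projections
   are pushed rightwards and injections leftwards until they cancel. *)
Ltac bp_simpl0 := repeat (progress rewrite
  ?dag_add ?dag_comp ?dag0 ?dag_pi1 ?dag_pi2 ?dag_io1 ?dag_io2 ?dag_invol ?dag_id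
  ?dag_hsum ?dag_hpair /hcopair
  -?comp_assoc ?comp_addl ?comp0l ?comp0r ?comp_id_l ?comp_id_r
  ?comp_pi1_io1 ?comp_pi2_io2 ?comp_pi1_io2 ?comp_pi2_io1
  ?pi1_io1 ?pi2_io2 ?pi1_io2 ?pi2_io1
  ?comp_pi1_hsum ?comp_pi2_hsum ?pi1_hsum ?pi2_hsum
  ?comp_hsum_io1 ?comp_hsum_io2 ?hsum_io1 ?hsum_io2
  ?comp_pi1_hpair ?comp_pi2_hpair ?pi1_hpair ?pi2_hpair
  ?comp_hcopair_io1 ?comp_hcopair_io2 ?hcopair_io1 ?hcopair_io2
  ?hsum0 ?hpair0 ?addr0 ?add0r).

Ltac bp_simpl := bp_simpl0; try reflexivity;
  repeat (progress (rewrite comp_addr; bp_simpl0)); try reflexivity.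

Ltac bp_ext := repeat apply: hom_into_bp_ext; repeat apply: hom_from_bp_ext.

Section MP13Inverse.
Variables (d : DagAddCat) (B C D : Ob d).
Local Notation Hom := (@Defs.Hom d).
Variables (f : Hom B D) (h : Hom D B).
Hypothesis fh : MP13_inverse f h.

Lemma MP13_proj_idem : comp (comp f h) (comp f h) = comp f h.
Proof. by case: fh => fhf _; rewrite comp_assoc -(comp_assoc f h f) fhf. Qed.

Lemma MP13_regression (k : Hom C D) :
  comp (dag (comp h k)) (comp (dag f) f) = comp (dag k) f.
Proof.
case: fh => fhf fh_sym.
rewrite dag_comp -comp_assoc (comp_assoc (dag h)) -dag_comp fh_sym.
by rewrite -comp_assoc fhf.
Qed.

Lemma MP13_residual_gram (k : Hom C D) :
  comp (dag (comp (idm D - comp f h) k)) (comp (idm D - comp f h) k) =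
  comp (dag k) k - comp (dag k) (comp f (comp h k)).
Proof.
have dag_e : dag (idm D - comp f h) = idm D - comp f h.
  by rewrite dag_add dagN dag_id fh.2.
have idem_e : comp (idm D - comp f h) (idm D - comp f h) = idm D - comp f h.
  rewrite comp_addl compNl comp_id_l comp_addr compNr comp_id_r.
  by rewrite MP13_proj_idem subrr subr0.
rewrite dag_comp dag_e -comp_assoc (comp_assoc (idm D - _)) idem_e.
by rewrite comp_addl comp_id_l compNl comp_addr compNr -comp_assoc.
Qed.

End MP13Inverse.

Section GramBlocks.
Variables (d : DagAddCat) (B C D : Ob d) (phi : Defs.Hom (bp B C) D).
Local Notation phi1 := (comp phi (io1 B C)).
Local Notation phi2 := (comp phi (io2 B C)).

Lemma gram_bpE :
  comp (dag phi) phi =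
  hpair (hcopair (comp (dag phi1) phi1) (comp (dag phi1) phi2))
        (hcopair (comp (dag phi2) phi1) (comp (dag phi2) phi2)).
Proof.
rewrite [LHS]hpair_eta [X in hpair X _]hcopair_eta [X in hpair _ X]hcopair_eta.
by rewrite !dag_comp dag_io1 dag_io2 !comp_assoc.
Qed.

End GramBlocks.

Section GaussCategory.
Variables (d : DagAddCat) (Xo : Ob d).
Local Notation Hom := (@Defs.Hom d).
Local Notation GT := (@GT d Xo _ _).
Implicit Types A B C : Ob d.

Lemma Gcomp_det A B C (g : Hom B C) (f : Hom A B) (p : Hom B B) (x : Hom Xo B) :
  Gcomp (GT g 0 0) (GT f p x) = GT (comp g f) (comp g (comp p (dag g))) (comp g x).
Proof. by rewrite /Gcomp /= !add0r. Qed.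

Lemma Gcomp_detA A B C D (g : Hom C D) (h : Hom B C) (F : GTrip Xo A B) :
  Gcomp (GT g 0 0) (Gcomp (GT h 0 0) F) = Gcomp (GT (comp g h) 0 0) F.
Proof. by rewrite /Gcomp /= !add0r dag_comp !comp_assoc. Qed.

Lemma Gtens_det A A' B B' (f : Hom A B) (g : Hom A' B') :
  Gtens (GT f 0 0) (GT g 0 0) = GT (hsum f g) 0 0.
Proof. by rewrite /Gtens /= hsum0 hpair0. Qed.

Lemma Gcomp_tens_id_copy A B (F : GTrip Xo A B) :
  Gcomp (Gtens F (GId Xo A)) (Gcopy Xo A) =
  GT (hpair (gf F) (idm A)) (hsum (gp F) 0) (hpair (gx F) 0).
Proof. by congr GT; bp_ext; bp_simpl. Qed.

Lemma GassocE A B C : Gassoc Xo A B C =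
  GT (hpair (comp (pi1 A B) (pi1 (bp A B) C)) (hsum (pi2 A B) (idm C))) 0 0.
Proof. by congr GT; bp_ext; bp_simpl. Qed.

End GaussCategory.

Section GaussConditionalEquation.
Variables (d : DagAddCat) (Xo A B C : Ob d).
Local Notation Hom := (@Defs.Hom d).
Local Notation GT := (@GT d Xo _ _).

Definition conditional_composite
    (G : GTrip Xo (bp B A) C) (F : GTrip Xo A (bp B C)) : GTrip Xo A (bp B C) :=
  Gcomp (Gtens (GId Xo B) G)
   (Gcomp (Gassoc Xo B B A)
    (Gcomp (Gtens (Gcopy Xo B) (GId Xo A))
     (Gcomp (Gtens (Gunitr Xo B) (GId Xo A))
      (Gcomp (Gtens (Gtens (GId Xo B) (Gdel Xo C)) (GId Xo A))
       (Gcomp (Gtens F (GId Xo A)) (Gcopy Xo A)))))).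

Lemma conditional_composite_det G F :
  conditional_composite G F =
  Gcomp (Gtens (GId Xo B) G)
    (Gcomp (GT (hpair (comp (pi1 B C) (pi1 (bp B C) A)) (hsum (pi1 B C) (idm A))) 0 0)
      (Gcomp (Gtens F (GId Xo A)) (Gcopy Xo A))).
Proof.
rewrite /conditional_composite GassocE !Gtens_det !Gcomp_detA.
by congr (Gcomp _ (Gcomp (GT _ 0 0) _)); bp_ext; bp_simpl.
Qed.

Section ClosedForm.
Variables (F : GTrip Xo A (bp B C)) (g1 : Hom B C) (g2 : Hom A C).
Variables (q : Hom C C) (y : Hom Xo C).
Local Notation f1 := (comp (pi1 B C) (gf F)).
Local Notation p11 := (comp (pi1 B C) (comp (gp F) (io1 B C))).
Local Notation x1 := (comp (pi1 B C) (gx F)).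

Lemma conditional_compositeE :
  conditional_composite (GT (hcopair g1 g2) q y) F =
  GT (hpair f1 (comp g1 f1 + g2))
     (hpair (hcopair p11 (comp p11 (dag g1)))
            (hcopair (comp g1 p11) (q + comp g1 (comp p11 (dag g1)))))
     (hpair x1 (y + comp g1 x1)).
Proof.
rewrite conditional_composite_det Gcomp_tens_id_copy Gcomp_det.
by congr GT; bp_ext; bp_simpl.
Qed.

End ClosedForm.

End GaussConditionalEquation.

Section MP13Conditional.
Variables (d : DagAddCat) (Xo A B C D : Ob d).
Local Notation Hom := (@Defs.Hom d).
Variables (phi : Hom (bp B C) D) (h : Hom D B).
Hypothesis phi1_h : MP13_inverse (comp phi (io1 B C)) h.
Variables (f : Hom A (bp B C)) (x : Hom Xo (bp B C)).
Local Notation phi1 := (comp phi (io1 B C)).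
Local Notation phi2 := (comp phi (io2 B C)).

Definition regression : Hom B C := dag (comp h phi2).

Definition residual : Hom C D := comp (idm D - comp phi1 h) phi2.

Definition MP13_conditional : GTrip Xo (bp B A) C :=
  GT (hcopair regression
        (comp (pi2 B C) f - comp regression (comp (pi1 B C) f)))
     (comp (dag residual) residual)
     (comp (pi2 B C) x - comp regression (comp (pi1 B C) x)).

Lemma MP13_conditional_gauss_map : gauss_map MP13_conditional.
Proof. by exists D, residual. Qed.

Lemma MP13_conditionalP :
  conditional_composite MP13_conditional (GT f (comp (dag phi) phi) x) =
  GT f (comp (dag phi) phi) x.
Proof.
have reg : comp regression (comp (dag phi1) phi1) = comp (dag phi2) phi1.
  exact: MP13_regression.
rewrite conditional_compositeE /= gram_bpE comp_pi1_hpair hcopair_io1.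
congr GT.
- by rewrite [_ + (_ - _)]addrC subrK -hpair_eta.
- congr (hpair (hcopair _ _) (hcopair _ _)) => //.
    by have := congr1 dag reg; rewrite dag_comp !dag_gram.
  rewrite /residual (MP13_residual_gram phi1_h) (comp_assoc regression) reg.
  by rewrite [dag regression]dag_invol -(comp_assoc (dag phi2) phi1) subrK.
- by rewrite subrK -hpair_eta.
Qed.

End MP13Conditional.

Theorem mainTheorem13 (X : DagAddCat) :
  has_MP13_inverses X -> forall Xo : Ob X, gauss_has_conditionals Xo.
Proof.
move=> MP Xo A B C [f _ x] [D [phi /= ->]].
have [h phi1_h] := MP _ _ (comp phi (io1 B C)).
exists (MP13_conditional phi h f x); split.
  exact: MP13_conditional_gauss_map.
exact: MP13_conditionalP.
Qed.
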